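(* For real $u,w$ and an integer $n\ge1$ let $g_n(u,w):=\sum_{i=1}^n i\,w^{i-1}u^{n-i}$. For every natural number $m\ge1$: (i) $$g_{4m+1}(w,u)-g_{4m+1}(u,w)=\sum_{i=0}^{2m-1}(4m-2i)(uw)^i\left(u^{4m-2i}-w^{4m-2i}\right)$$ $$=(u+w)\sum_{i=0}^{m-1}(4m-2-4i)\left(u^{4m-1-4i}-w^{4m-1-4i}\right)(uw)^{2i}+2\sum_{i=0}^{m-1}\left(u^{4m-4i}-w^{4m-4i}\right)(uw)^{2i};$$ (ii) $$g_{4m+3}(w,u)-g_{4m+3}(u,w)=\sum_{i=0}^{2m}(4m+2-2i)(uw)^i\left(u^{4m+2-2i}-w^{4m+2-2i}\right)$$ $$=(u+w)\sum_{i=0}^{m-1}(4m-4i)\left(u^{4m+1-4i}-w^{4m+1-4i}\right)(uw)^{2i}+2\sum_{i=0}^{m}\left(u^{4m+2-4i}-w^{4m+2-4i}\right)(uw)^{2i}.$$ Furthermore, let $\beta>0$, $k>0$, and $w=\delta(u)$ with $\delta$ the involution defined in the context. Then for all odd integers $n\ge3$: (a) if $-k<u_0<0$, then $g_n(u,w)>g_n(w,u)$ for all $u\in(0,u_1)$; (b) if $u_0<-k$, then $g_n(u,w)<g_n(w,u)$ for all $u\in(0,k)$.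
   Context: $\Phi(u)=\beta\left(-\frac{u^4}{4}+\frac{k+u_0}{3}u^3-\frac{ku_0}{2}u^2\right)$. Case $-k<u_0<0$: $u_1$ is the unique point of $(0,k)$ with $\Phi(u_1)=\Phi(u_0)$, and for $u\in(0,u_1)$, $\delta(u)$ is the unique $w\in(u_0,0)$ with $\Phi(w)=\Phi(u)$. Case $u_0<-k$: $w_2$ is the unique point of $(u_0,0)$ with $\Phi(w_2)=\Phi(k)$, and for $u\in(0,k)$, $\delta(u)$ is the unique $w\in(w_2,0)$ with $\Phi(w)=\Phi(u)$. *)

From mathcomp Require Import all_boot all_order all_algebra.
From mathcomp Require Import reals.
Set Implicit Arguments. Unset Strict Implicit. Unset Printing Implicit Defensive.
Import Order.TTheory GRing.Theory Num.Theory.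
Local Open Scope ring_scope.

Definition gfun (R : ringType) (n : nat) (u w : R) : R :=
  \sum_(1 <= i < n.+1) i%:R * w ^+ i.-1 * u ^+ (n - i).

Definition Phi (R : realType) (beta k u0 u : R) : R :=
  beta * (- (u ^+ 4) / 4%:R + (k + u0) / 3%:R * u ^+ 3 - k * u0 / 2%:R * u ^+ 2).

(* Pairing the index j with 2M - j turns g_{2M+1}(w,u) - g_{2M+1}(u,w) into
   the first sum S_M of (i) and (ii).  Consecutive terms of S_M group into
   (uw)^{2i} times (e+2)(u^{e+2} - w^{e+2}) + e uw (u^e - w^e)
   = (u + w) e (u^{e+1} - w^{e+1}) + 2 (u^{e+2} - w^{e+2}),
   which gives the second expressions; for u > 0 > w and e even both summands
   have the sign of u + w, hence so does S_M.
   With P = 12 Phi / beta we have P' = -12 x (x - k) (x - u0) and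
   P(-x) - P(x) = -8 (k + u0) x^3, so comparing P(u) with P(w) = P(-|w|) on
   the interval where P is monotone shows that Phi w = Phi u forces
   u + w < 0 when k + u0 > 0 and u + w > 0 when k + u0 < 0. *)

From mathcomp Require Import all_boot all_order all_algebra.
From mathcomp Require Import reals ring lra zify.
Set Implicit Arguments.
Unset Strict Implicit.
Unset Printing Implicit Defensive.
Import Order.TTheory GRing.Theory Num.Theory.
Local Open Scope ring_scope.

Lemma big_nat_mirror (V : nmodType) (F : nat -> V) (M : nat) :
  \sum_(0 <= j < (2 * M).+1) F j = \sum_(0 <= i < M) (F i + F (2 * M - i)%N) + F M.
Proof.
elim: M F => [|M IH] F; first by rewrite big_nat1 big_geq ?add0r.
have -> : (2 * M.+1).+1 = (2 * M).+3 by lia.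
rewrite big_nat_recl // big_nat_recr //= (IH (fun j => F j.+1)) big_nat_recl //.
rewrite subn0 mulnS add2n; set S := \sum_(_ <= _ < _) _.
have -> : S = \sum_(0 <= i < M) (F i.+1 + F ((2 * M).+2 - i.+1)%N).
  by apply: eq_big_nat => i /andP[_ hi]; congr (_ + F _); lia.
by rewrite -!addrA; congr (_ + _); rewrite [RHS]addrCA [F (2 * M).+2 + _]addrC.
Qed.

Lemma big_nat_pairs (V : nmodType) (F : nat -> V) (m : nat) :
  \sum_(0 <= i < 2 * m) F i = \sum_(0 <= j < m) (F (2 * j)%N + F (2 * j).+1).
Proof.
elim: m => [|m IH]; first by rewrite !big_geq.
by rewrite mulnS add2n !big_nat_recr //= IH addrA.
Qed.

Section SkewSum.
Variables (R : comNzRingType) (u w : R).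

Lemma gfun_lower_index n :
  gfun n w u = \sum_(0 <= j < n) j.+1%:R * u ^+ j * w ^+ (n - j.+1).
Proof. by rewrite /gfun big_add1. Qed.

Lemma gfun_upper_index n :
  gfun n u w = \sum_(0 <= j < n) (n - j)%:R * u ^+ j * w ^+ (n - j.+1).
Proof.
rewrite /gfun big_add1 big_nat_rev; apply: eq_big_nat => j /andP[_ hj].
rewrite /= add0n.
have -> : (n - j.+1).+1 = (n - j)%N by lia.
by rewrite subKn 1?ltnW // mulrAC.
Qed.

Definition skew_sum (M : nat) : R :=
  \sum_(0 <= i < M) (2 * M - 2 * i)%:R * (u * w) ^+ i
    * (u ^+ (2 * M - 2 * i) - w ^+ (2 * M - 2 * i)).

Definition skew_pair (e : nat) : R :=
  e.+2%:R * (u ^+ e.+2 - w ^+ e.+2) + e%:R * (u * w) * (u ^+ e - w ^+ e).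

Lemma gfun_odd_skew M : gfun (2 * M).+1 w u - gfun (2 * M).+1 u w = skew_sum M.
Proof.
rewrite gfun_lower_index gfun_upper_index -sumrB big_nat_mirror.
have -> : ((2 * M).+1 - M = M.+1)%N by lia.
rewrite subrr addr0 /skew_sum; apply: eq_big_nat => i /andP[_ hi].
have [d ->] : exists d, M = (i + d)%N by exists (M - i)%N; lia.
have -> : (2 * (i + d) - i = i + 2 * d)%N by lia.
have -> : (2 * (i + d) - 2 * i = 2 * d)%N by lia.
have -> : ((2 * (i + d)).+1 - i = i + 2 * d + 1)%N by lia.
have -> : ((2 * (i + d)).+1 - (i + 2 * d) = i + 1)%N by lia.
have -> : ((2 * (i + d)).+1 - i.+1 = i + 2 * d)%N by lia.
have -> : ((2 * (i + d)).+1 - (i + 2 * d).+1 = i)%N by lia.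
by rewrite !exprD exprMn; ring.
Qed.

Lemma skew_pair_factor e :
  skew_pair e = (u + w) * (e%:R * (u ^+ e.+1 - w ^+ e.+1)) + 2 * (u ^+ e.+2 - w ^+ e.+2).
Proof. by rewrite /skew_pair !exprS; ring. Qed.

Lemma skew_sum1 : skew_sum 1 = skew_pair 0.
Proof. by rewrite /skew_sum /skew_pair big_nat1 muln0 subn0 muln1; ring. Qed.

Lemma skew_sumSS M : skew_sum M.+2 = skew_pair (2 * M).+2 + (u * w) ^+ 2 * skew_sum M.
Proof.
rewrite /skew_sum !big_nat_recl // big_distrr addrA /=; congr (_ + _).
  have -> : (2 * M.+2 - 2 * 0 = (2 * M).+4)%N by lia.
  have -> : (2 * M.+2 - 2 * 1 = (2 * M).+2)%N by lia.
  by rewrite /skew_pair; ring.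
apply: eq_big_nat => i _.
have -> : (2 * M.+2 - 2 * i.+2 = 2 * M - 2 * i)%N by lia.
by rewrite !exprS; ring.
Qed.

Lemma skew_sum_pairs N m : (4 * m <= N)%N ->
  \sum_(0 <= i < 2 * m) (N - 2 * i)%:R * (u * w) ^+ i * (u ^+ (N - 2 * i) - w ^+ (N - 2 * i))
  = (u + w) * \sum_(0 <= i < m) (N - 2 - 4 * i)%:R
        * (u ^+ (N - 1 - 4 * i) - w ^+ (N - 1 - 4 * i)) * (u * w) ^+ (2 * i)
    + 2 * \sum_(0 <= i < m) (u ^+ (N - 4 * i) - w ^+ (N - 4 * i)) * (u * w) ^+ (2 * i).
Proof.
move=> le_4m_N; rewrite big_nat_pairs !big_distrr -big_split /=; apply: eq_big_nat => i /andP[_ hi].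
have [e ->] : exists e, N = (4 * i + e.+2)%N by exists (N - 4 * i - 2)%N; lia.
have -> : (4 * i + e.+2 - 2 * (2 * i) = e.+2)%N by lia.
have -> : (4 * i + e.+2 - 2 * (2 * i).+1 = e)%N by lia.
have -> : (4 * i + e.+2 - 2 - 4 * i = e)%N by lia.
have -> : (4 * i + e.+2 - 1 - 4 * i = e.+1)%N by lia.
have -> : (4 * i + e.+2 - 4 * i = e.+2)%N by lia.
transitivity ((u * w) ^+ (2 * i) * skew_pair e).
  by rewrite /skew_pair [(u * w) ^+ (2 * i).+1]exprSr; ring.
by rewrite skew_pair_factor; ring.
Qed.

Lemma skew_sum_pairsS m :
  \sum_(0 <= i < (2 * m).+1) (4 * m + 2 - 2 * i)%:R * (u * w) ^+ i
      * (u ^+ (4 * m + 2 - 2 * i) - w ^+ (4 * m + 2 - 2 * i))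
  = (u + w) * \sum_(0 <= i < m) (4 * m - 4 * i)%:R
        * (u ^+ (4 * m + 1 - 4 * i) - w ^+ (4 * m + 1 - 4 * i)) * (u * w) ^+ (2 * i)
    + 2 * \sum_(0 <= i < m.+1) (u ^+ (4 * m + 2 - 4 * i) - w ^+ (4 * m + 2 - 4 * i))
        * (u * w) ^+ (2 * i).
Proof.
rewrite big_nat_recr // skew_sum_pairs ?leq_addr // [in RHS]big_nat_recr //=.
rewrite [in RHS]mulrDr addrA.
congr (_ * _ + _ + _).
  apply: eq_big_nat => i _.
  by have [-> ->] : (4 * m + 2 - 2 - 4 * i = 4 * m - 4 * i)%N
                    /\ (4 * m + 2 - 1 - 4 * i = 4 * m + 1 - 4 * i)%N by lia.
have [-> ->] : (4 * m + 2 - 2 * (2 * m) = 2)%N /\ (4 * m + 2 - 4 * m = 2)%N by lia.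
by ring.
Qed.

End SkewSum.

Lemma subrXn_sign (R : realDomainType) (x y : R) n :
  0 <= x -> 0 <= y -> x != y -> (0 < n)%N -> 0 < (x - y) * (x ^+ n - y ^+ n).
Proof.
move=> x_ge0 y_ge0; rewrite neq_lt => /orP[] lt_xy n_gt0.
  by rewrite nmulr_rgt0 ?subr_lt0 // ltrXn2r // -lt0n.
by rewrite pmulr_rgt0 ?subr_gt0 // ltrXn2r // -lt0n.
Qed.

Section SkewSign.
Variables (R : realDomainType) (u w : R).
Hypotheses (u_gt0 : 0 < u) (w_lt0 : w < 0) (uDw_neq0 : u + w != 0).

Lemma subrX_odd_gt0 n : 0 < u ^+ (2 * n).+1 - w ^+ (2 * n).+1.
Proof.
rewrite subr_gt0 (lt_trans _ (exprn_gt0 _ u_gt0)) //.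
by rewrite exprn_odd_lt0 // mul2n /= odd_double.
Qed.

Lemma subrX_even_sign n : (0 < n)%N -> 0 < (u + w) * (u ^+ (2 * n) - w ^+ (2 * n)).
Proof.
move=> n_gt0; have w_lt_u : w < u := lt_trans w_lt0 u_gt0.
have sqr_neq : u ^+ 2 != w ^+ 2.
  by rewrite -subr_eq0 subr_sqr mulf_neq0 // subr_eq0 gt_eqF.
have := subrXn_sign (sqr_ge0 u) (sqr_ge0 w) sqr_neq n_gt0.
by rewrite subr_sqr -mulrA pmulr_rgt0 ?subr_gt0 // !exprM.
Qed.

Lemma skew_pair_sign k : 0 < (u + w) * skew_pair u w (2 * k).
Proof.
have odd_term : 0 <= (2 * k)%:R * (u ^+ (2 * k).+1 - w ^+ (2 * k).+1).
  by rewrite mulr_ge0 // ltW // subrX_odd_gt0.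
have even_term := subrX_even_sign (ltn0Sn k); rewrite mulnS add2n in even_term.
rewrite skew_pair_factor; move: odd_term even_term.
set s := u + w; set X := _ * (_ - _); set B := _ - _ => X_ge0 sB_gt0.
have -> : s * (s * X + 2 * B) = s ^+ 2 * X + 2 * (s * B) by ring.
by apply: ltr_wpDl; [exact: mulr_ge0 (sqr_ge0 s) X_ge0 | rewrite pmulr_rgt0].
Qed.

Lemma skew_sum_sign M : 0 < (u + w) * skew_sum u w M.+1.
Proof.
suff [] : 0 < (u + w) * skew_sum u w M.+1 /\ 0 < (u + w) * skew_sum u w M.+2 by [].
elim: M => [|M [IH1 IH2]].
  rewrite skew_sum1 skew_sumSS [skew_sum _ _ 0]big_geq // mulr0 addr0.
  by split; [exact: (skew_pair_sign 0) | exact: (skew_pair_sign 1)].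
split=> //; rewrite skew_sumSS mulrDr mulrCA.
have -> : (2 * M.+1).+2 = (2 * M.+2)%N by lia.
by rewrite ltr_wpDr ?skew_pair_sign // mulr_ge0 ?exprn_even_ge0 ?ltW.
Qed.

Lemma gfun_skew_sign n : odd n -> (3 <= n)%N ->
  0 < (u + w) * (gfun n w u - gfun n u w).
Proof.
move=> n_odd n_ge3; have [M ->] : exists M, n = (2 * M.+1).+1 by exists (n./2).-1; lia.
by rewrite gfun_odd_skew skew_sum_sign.
Qed.

End SkewSign.

(* The derivative of [quartic p q] is [12 x (p - x) (x + q)]. *)
Definition quartic (R : comNzRingType) (p q x : R) : R :=
  - 3 * x ^+ 4 + 4 * (p - q) * x ^+ 3 + 6 * p * q * x ^+ 2.

Section Quartic.
Variable R : realDomainType.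
Implicit Types p q s t x y : R.

Lemma quarticN p q x : quartic p q (- x) = quartic q p x.
Proof. by rewrite /quartic; ring. Qed.

Lemma quartic_le p q s t : 0 <= q -> 0 <= s -> s <= t -> t <= p ->
  quartic p q s <= quartic p q t.
Proof.
move=> q_ge0 s_ge0 st tp; rewrite -subr_ge0.
have -> : quartic p q t - quartic p q s = (t - s) * (4 * (p - t) * (t ^+ 2 + t * s + s ^+ 2)
    + (t - s) * (t ^+ 2 + 2 * t * s + 3 * s ^+ 2)
    + q * (6 * (p - t) * (t + s) + 2 * (t - s) * (t + 2 * s))) by rewrite /quartic; ring.
have t_ge0 : 0 <= t := le_trans s_ge0 st.
have ts : 0 <= t - s by rewrite subr_ge0.
have pt : 0 <= p - t by rewrite subr_ge0.
by repeat first [assumption | exact: sqr_ge0 | exact: ler0n | apply: addr_ge0 | apply: mulr_ge0].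
Qed.

Lemma quartic_swap_lt p q x y : 0 < q -> q < p -> 0 < x -> x <= y -> y <= p ->
  quartic q p x < quartic p q y.
Proof.
move=> q_gt0 qp x_gt0 xy yp.
have -> : quartic q p x = quartic p q x - 8 * (p - q) * x ^+ 3 by rewrite /quartic; ring.
rewrite ltrBlDr (le_lt_trans (quartic_le _ _ xy yp)) ?ltW // ltrDl.
by rewrite !mulr_gt0 ?subr_gt0 ?exprn_gt0.
Qed.

End Quartic.

Lemma Phi_quartic (R : realType) (beta k u0 x : R) :
  Phi beta k u0 x = beta / 12 * quartic k (- u0) x.
Proof. by rewrite /Phi /quartic; field. Qed.

Lemma Phi_eq_quartic (R : realType) (beta k u0 x y : R) : 0 < beta ->
  Phi beta k u0 x = Phi beta k u0 y -> quartic k (- u0) x = quartic k (- u0) y.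
Proof.
move=> beta_gt0; rewrite !Phi_quartic; apply: mulfI.
by rewrite mulf_neq0 ?invr_eq0 ?lt0r_neq0.
Qed.

Lemma Phi_eq_addr_lt0 (R : realType) (beta k u0 u w : R) : 0 < beta -> - k < u0 -> u0 < 0 ->
  0 < u -> u < k -> w < 0 -> Phi beta k u0 w = Phi beta k u0 u -> u + w < 0.
Proof.
move=> beta_gt0 k_lt u0_lt0 u_gt0 u_lt_k w_lt0 /(Phi_eq_quartic beta_gt0) Ewu.
rewrite ltNge; apply/negP => uDw_ge0.
have : quartic k (- u0) w < quartic k (- u0) u.
  by rewrite -[quartic k _ w]quarticN quartic_swap_lt //; lra.
by rewrite Ewu ltxx.
Qed.

Lemma Phi_eq_addr_gt0 (R : realType) (beta k u0 u w : R) : 0 < beta -> 0 < k -> u0 < - k ->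
  0 < u -> u0 < w -> w < 0 -> Phi beta k u0 w = Phi beta k u0 u -> 0 < u + w.
Proof.
move=> beta_gt0 k_gt0 u0_lt u_gt0 u0_lt_w w_lt0 /(Phi_eq_quartic beta_gt0) Ewu.
rewrite ltNge; apply/negP => uDw_le0.
have : quartic k (- u0) u < quartic k (- u0) w.
  by rewrite -[quartic k _ w]quarticN quartic_swap_lt //; lra.
by rewrite Ewu ltxx.
Qed.

Theorem lemma3p9 (R : realType) :
  (forall m : nat, (1 <= m)%N -> forall u w : R,
     (* (i) *)
     (gfun (4 * m).+1 w u - gfun (4 * m).+1 u w
        = \sum_(0 <= i < 2 * m) (4 * m - 2 * i)%:R * (u * w) ^+ i
            * (u ^+ (4 * m - 2 * i) - w ^+ (4 * m - 2 * i))
      /\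
      \sum_(0 <= i < 2 * m) (4 * m - 2 * i)%:R * (u * w) ^+ i
            * (u ^+ (4 * m - 2 * i) - w ^+ (4 * m - 2 * i))
        = (u + w) * \sum_(0 <= i < m) (4 * m - 2 - 4 * i)%:R
              * (u ^+ (4 * m - 1 - 4 * i) - w ^+ (4 * m - 1 - 4 * i)) * (u * w) ^+ (2 * i)
          + 2%:R * \sum_(0 <= i < m)
              (u ^+ (4 * m - 4 * i) - w ^+ (4 * m - 4 * i)) * (u * w) ^+ (2 * i))
     /\
     (* (ii) *)
     (gfun (4 * m + 3) w u - gfun (4 * m + 3) u w
        = \sum_(0 <= i < (2 * m).+1) (4 * m + 2 - 2 * i)%:R * (u * w) ^+ i
            * (u ^+ (4 * m + 2 - 2 * i) - w ^+ (4 * m + 2 - 2 * i))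
      /\
      \sum_(0 <= i < (2 * m).+1) (4 * m + 2 - 2 * i)%:R * (u * w) ^+ i
            * (u ^+ (4 * m + 2 - 2 * i) - w ^+ (4 * m + 2 - 2 * i))
        = (u + w) * \sum_(0 <= i < m) (4 * m - 4 * i)%:R
              * (u ^+ (4 * m + 1 - 4 * i) - w ^+ (4 * m + 1 - 4 * i)) * (u * w) ^+ (2 * i)
          + 2%:R * \sum_(0 <= i < m.+1)
              (u ^+ (4 * m + 2 - 4 * i) - w ^+ (4 * m + 2 - 4 * i)) * (u * w) ^+ (2 * i)))
  /\
  (forall beta k u0 : R, 0 < beta -> 0 < k ->
     (* (a) case -k < u0 < 0; u1 = the point of (0,k) with Phi u1 = Phi u0;
        w = delta u = the point of (u0,0) with Phi w = Phi u *)
     (- k < u0 -> u0 < 0 ->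
        forall u1 : R, 0 < u1 -> u1 < k -> Phi beta k u0 u1 = Phi beta k u0 u0 ->
        forall n : nat, odd n -> (3 <= n)%N ->
        forall u : R, 0 < u -> u < u1 ->
        forall w : R, u0 < w -> w < 0 -> Phi beta k u0 w = Phi beta k u0 u ->
          gfun n w u < gfun n u w)
     /\
     (* (b) case u0 < -k; w2 = the point of (u0,0) with Phi w2 = Phi k;
        w = delta u = the point of (w2,0) with Phi w = Phi u *)
     (u0 < - k ->
        forall w2 : R, u0 < w2 -> w2 < 0 -> Phi beta k u0 w2 = Phi beta k u0 k ->
        forall n : nat, odd n -> (3 <= n)%N ->
        forall u : R, 0 < u -> u < k ->
        forall w : R, w2 < w -> w < 0 -> Phi beta k u0 w = Phi beta k u0 u ->
          gfun n u w < gfun n w u)).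
Proof.
split=> [m _ u w | beta k u0 beta_gt0 k_gt0].
  split; split; [| exact: skew_sum_pairs | | exact: skew_sum_pairsS].
    by rewrite -[(4 * m)%N]/(2 * 2 * m)%N -mulnA gfun_odd_skew.
  have -> : (4 * m + 3 = (2 * (2 * m).+1).+1)%N by lia.
  by rewrite gfun_odd_skew /skew_sum; have -> : (2 * (2 * m).+1 = 4 * m + 2)%N by lia.
split.
  move=> k_lt u0_lt0 u1 _ u1_lt_k _ n n_odd n_ge3 u u_gt0 u_lt_u1 w _ w_lt0 Phi_wu.
  have uDw_lt0 := Phi_eq_addr_lt0 beta_gt0 k_lt u0_lt0 u_gt0 (lt_trans u_lt_u1 u1_lt_k) w_lt0 Phi_wu.
  have := gfun_skew_sign u_gt0 w_lt0 (ltr0_neq0 uDw_lt0) n_odd n_ge3.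
  by rewrite nmulr_rgt0 // subr_lt0.
move=> u0_lt w2 u0_lt_w2 _ _ n n_odd n_ge3 u u_gt0 _ w w2_lt_w w_lt0 Phi_wu.
have uDw_gt0 := Phi_eq_addr_gt0 beta_gt0 k_gt0 u0_lt u_gt0 (lt_trans u0_lt_w2 w2_lt_w) w_lt0 Phi_wu.
have := gfun_skew_sign u_gt0 w_lt0 (lt0r_neq0 uDw_gt0) n_odd n_ge3.
by rewrite pmulr_rgt0 // subr_gt0.
Qed.
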